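(* Let $X$ be a Polish space, $f:X\to\mathbb R$ a Baire-1 function and $a<b$ reals. Then $$\alpha(f,a,b)=\sup\{\alpha(f,K,a,b):K\subseteq X\text{ compact}\}.$$
   Context: Separation rank: for $f:X\to\mathbb R$, reals $a<b$ and closed $F\subseteq X$, let $F'_{f,a,b}=\overline{F\cap[f<a]}\cap\overline{F\cap[f>b]}$, where $[f<a]=\{x:f(x)<a\}$, $[f>b]=\{x:f(x)>b\}$. Define iterated derivatives $F^{(0)}_{f,a,b}=F$, $F^{(\xi+1)}_{f,a,b}=(F^{(\xi)}_{f,a,b})'_{f,a,b}$ and $F^{(\lambda)}_{f,a,b}=\bigcap_{\xi<\lambda}F^{(\xi)}_{f,a,b}$ for limit $\lambda$. $\alpha(f,F,a,b)$ is the least ordinal $\xi$ with $F^{(\xi)}_{f,a,b}=\varnothing$ if such $\xi<\omega_1$ exists, and $\omega_1$ otherwise; $\alpha(f,a,b)=\alpha(f,X,a,b)$. *)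

From Stdlib Require Import Reals List.
Open Scope R_scope.

(** * Metric spaces (a Polish space is represented by a type with a
      compatible mcomplete separable metric). Subsets are predicates. *)
Section Metric.

Context {X : Type}.
Variable d : X -> X -> R.

Definition is_metric : Prop :=
  (forall x y, 0 <= d x y) /\
  (forall x y, d x y = 0 <-> x = y) /\
  (forall x y, d x y = d y x) /\
  (forall x y z, d x z <= d x y + d y z).

Definition cauchy (u : nat -> X) : Prop :=
  forall eps, 0 < eps -> exists N, forall m n, (N <= m)%nat -> (N <= n)%nat ->
    d (u m) (u n) < eps.

Definition converges (u : nat -> X) (x : X) : Prop :=
  forall eps, 0 < eps -> exists N, forall n, (N <= n)%nat -> d (u n) x < eps.

Definition mcomplete : Prop :=
  forall u, cauchy u -> exists x, converges u x.

(** countable dense subset (enumerated with [option] to allow X mempty) *)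
Definition separable : Prop :=
  exists s : nat -> option X,
    forall x eps, 0 < eps -> exists n y, s n = Some y /\ d x y < eps.

Definition polish : Prop := is_metric /\ mcomplete /\ separable.

Definition is_open (U : X -> Prop) : Prop :=
  forall x, U x -> exists eps, 0 < eps /\ forall y, d x y < eps -> U y.

Definition mcompact (K : X -> Prop) : Prop :=
  forall (I : Type) (U : I -> X -> Prop),
    (forall i, is_open (U i)) ->
    (forall x, K x -> exists i, U i x) ->
    exists l : list I, forall x, K x -> exists i, In i l /\ U i x.

Definition mcontinuous (g : X -> R) : Prop :=
  forall x eps, 0 < eps -> exists delta, 0 < delta /\
    forall y, d x y < delta -> Rabs (g y - g x) < eps.

Definition baire1 (f : X -> R) : Prop :=
  exists g : nat -> X -> R, (forall n, mcontinuous (g n)) /\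
    forall x, Un_cv (fun n => g n x) (f x).

Definition mclosure (A : X -> Prop) (x : X) : Prop :=
  forall eps, 0 < eps -> exists y, A y /\ d x y < eps.

Definition mempty (A : X -> Prop) : Prop := forall x, ~ A x.

Definition sderiv (f : X -> R) (a b : R) (F : X -> Prop) : X -> Prop :=
  fun x => mclosure (fun y => F y /\ f y < a) x /\
           mclosure (fun y => F y /\ f y > b) x.
End Metric.

(** * Countable ordinals as Brouwer trees *)
Inductive Ord : Type :=
| OZ : Ord
| OS : Ord -> Ord
| OL : (nat -> Ord) -> Ord.   (* supremum of a sequence *)

(** the ordinal order (a preorder on trees; sound and mcomplete for the
    ordinal interpretation) *)
Inductive ole : Ord -> Ord -> Prop :=
| ole_Z : forall x, ole OZ x
| ole_succ : forall x, ole x (OS x)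
| ole_S : forall x y, ole x y -> ole (OS x) (OS y)
| ole_cocone : forall x g n, ole x (g n) -> ole x (OL g)
| ole_limiting : forall g x, (forall n, ole (g n) x) -> ole (OL g) x
| ole_trans : forall x y z, ole x y -> ole y z -> ole x z.

(** ordinals <= omega_1: [Some xi] a countable ordinal, [None] = omega_1 *)
Definition ord1 := option Ord.

Definition ord1_le (o o' : ord1) : Prop :=
  match o, o' with
  | _, None => True
  | None, Some _ => False
  | Some x, Some y => ole x y
  end.

Fixpoint iter_deriv {X : Type} (d : X -> X -> R) (f : X -> R) (a b : R)
    (F : X -> Prop) (xi : Ord) : X -> Prop :=
  match xi with
  | OZ => F
  | OS xi' => sderiv d f a b (iter_deriv d f a b F xi')
  | OL g => fun x => forall n, iter_deriv d f a b F (g n) x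
  end.

Definition is_alpha {X : Type} (d : X -> X -> R) (f : X -> R) (F : X -> Prop)
    (a b : R) (o : ord1) : Prop :=
  match o with
  | Some xi => mempty (iter_deriv d f a b F xi) /\
      forall eta, mempty (iter_deriv d f a b F eta) -> ole xi eta
  | None => forall eta, ~ mempty (iter_deriv d f a b F eta)
  end.

From Stdlib Require Import Reals List Lra Lia Classical ClassicalEpsilon.
Open Scope R_scope.

(** Since K ⊆ F implies K^(xi) ⊆ F^(xi), every compact K ⊆ F has rank at
    most alpha(f,F,a,b); the substance is the converse, which is a
    localization property of the derivative: if F is closed and x lies in
    F^(eta), then for every eps > 0 there is a compact K ⊆ F inside the
    eps-ball around x with x in K^(eta).  It is proved by induction on eta:
    the compact set is a "comet" {x} ∪ ⋃_n K_n whose pieces K_n shrink to x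
    and witness, at scale 1/(n+1), the points of F^(eta) used by x. *)

(** A structurally recursive order on Brouwer trees, [ord_le x y], which
    agrees with [ole] but is easier to reason about by induction; [OS x]
    is below [OL h] iff it is below some [h n]. *)
Fixpoint ord_le (x : Ord) : Ord -> Prop :=
  match x with
  | OZ => fun _ => True
  | OS x' => fix succ_le (y : Ord) : Prop :=
      match y with
      | OZ => False
      | OS y' => ord_le x' y'
      | OL h => exists n, succ_le (h n)
      end
  | OL g => fun y => forall n, ord_le (g n) y
  end.

Definition ord_lt (x y : Ord) : Prop := ord_le (OS x) y.

Lemma ord_le_cocone x g n : ord_le x (g n) -> ord_le x (OL g).
Proof.
  revert g n; induction x as [|x IH|k IH]; intros g n H.
  - exact I.
  - exists n; exact H.
  - intro m; apply (IH m g n), H.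
Qed.

Lemma ord_le_refl x : ord_le x x.
Proof.
  induction x as [|x IH|g IH].
  - exact I.
  - exact IH.
  - intro n; apply (ord_le_cocone _ g n), IH.
Qed.

Lemma ord_le_trans_succ x :
  (forall y z, ord_le x y -> ord_le y z -> ord_le x z) ->
  forall z y, ord_le x y -> ord_le (OS y) z -> ord_le (OS x) z.
Proof.
  intros Htrans z; induction z as [|z IHz|h IHh]; intros y Hxy Hyz.
  - contradiction.
  - exact (Htrans y z Hxy Hyz).
  - destruct Hyz as [n Hn]; exists n; exact (IHh n y Hxy Hn).
Qed.

Lemma ord_le_trans x y z : ord_le x y -> ord_le y z -> ord_le x z.
Proof.
  revert y z; induction x as [|x IH|g IH].
  - intros; exact I.
  - intros y; induction y as [|y IHy|h IHh]; intros z Hxy Hyz.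
    + contradiction.
    + exact (ord_le_trans_succ x IH z y Hxy Hyz).
    + destruct Hxy as [n Hn]; exact (IHh n z Hn (Hyz n)).
  - intros y z Hxy Hyz n; exact (IH n y z (Hxy n) Hyz).
Qed.

Lemma ord_le_succ x : ord_le x (OS x).
Proof.
  induction x as [|x IH|g IH].
  - exact I.
  - exact IH.
  - intro n; apply ord_le_trans with (OS (g n)); [apply IH|].
    exact (ord_le_cocone (g n) g n (ord_le_refl (g n))).
Qed.

Lemma ord_lt_le x y : ord_lt x y -> ord_le x y.
Proof.
  intro H; apply ord_le_trans with (OS x); [apply ord_le_succ | exact H].
Qed.

Lemma ord_le_ole x y : ord_le x y -> ole x y.
Proof.
  revert y; induction x as [|x IH|g IH].
  - intros; apply ole_Z.
  - intro y; induction y as [|y IHy|h IHh]; intro H.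
    + contradiction.
    + apply ole_S, IH, H.
    + destruct H as [n Hn]; apply ole_cocone with n, IHh, Hn.
  - intros y H; apply ole_limiting; intro n; apply IH, H.
Qed.

Lemma ord_le_total x y : ~ ord_lt y x -> ord_le x y.
Proof.
  revert y; induction x as [|x IH|g IH]; intros y H.
  - exact I.
  - induction y as [|y IHy|h IHh].
    + exfalso; apply H; exact I.
    + apply IH; exact H.
    + apply NNPP; intro Hnot; apply H; intro n.
      apply NNPP; intro Hn; apply Hnot; exists n; apply IHh, Hn.
  - intro n; apply IH; intro Hlt; apply H; exists n; exact Hlt.
Qed.

Lemma ord_lt_wf : well_founded ord_lt.
Proof.
  assert (Hacc : forall y x, ord_le x y -> Acc ord_lt x).
  { induction y as [|y IH|h IH]; intros x Hx; constructor; intros z Hz;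
      pose proof (ord_le_trans _ _ _ Hz Hx) as Hzy.
    - destruct Hzy.
    - apply IH, Hzy.
    - destruct Hzy as [n Hn]; apply (IH n), ord_lt_le, Hn. }
  intro x; exact (Hacc x x (ord_le_refl x)).
Qed.

Lemma ord_least (P : Ord -> Prop) :
  (exists x, P x) -> exists m, P m /\ forall y, P y -> ole m y.
Proof.
  intros [x Hx]; revert Hx.
  induction x as [x IH] using (well_founded_ind ord_lt_wf); intro Hx.
  destruct (classic (exists z, P z /\ ord_lt z x)) as [[z [Hz Hzx]] | Hnone].
  - exact (IH z Hzx Hz).
  - exists x; split; [exact Hx|].
    intros y Hy; apply ord_le_ole, ord_le_total.
    intro Hyx; apply Hnone; exists y; split; assumption.
Qed.

Lemma inv_succ_pos n : 0 < / INR (S n).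
Proof. apply Rinv_0_lt_compat, lt_0_INR; lia. Qed.

Lemma inv_succ_anti m n : (m <= n)%nat -> / INR (S n) <= / INR (S m).
Proof. intro H; apply Rinv_le_contravar; [apply lt_0_INR; lia | apply le_INR; lia]. Qed.

Lemma inv_succ_small e : 0 < e -> exists n, / INR (S n) < e.
Proof.
  intro He; destruct (archimed_cor1 e He) as [N [HN HN0]].
  exists N; apply Rle_lt_trans with (/ INR N); [|exact HN].
  apply Rinv_le_contravar; [apply lt_0_INR; lia | apply le_INR; lia].
Qed.

Lemma list_nat_bound (l : list nat) : exists M, forall i, In i l -> (i <= M)%nat.
Proof.
  induction l as [|j l [M HM]].
  - exists 0%nat; intros i [].
  - exists (Nat.max j M); intros i [Hi|Hi]; [subst; lia|].
    specialize (HM i Hi); lia.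
Qed.

Definition shrink (eps : R) (n : nat) : R := Rmin eps (/ INR (S n)).

Lemma shrink_pos eps n : 0 < eps -> 0 < shrink eps n.
Proof. intro; apply Rmin_glb_lt; [assumption | apply inv_succ_pos]. Qed.

Lemma shrink_le_eps eps n : shrink eps n <= eps.
Proof. apply Rmin_l. Qed.

Lemma shrink_le_inv eps n : shrink eps n <= / INR (S n).
Proof. apply Rmin_r. Qed.

Section Metric.

Context {X : Type} (d : X -> X -> R).
Hypothesis Hm : is_metric d.

Definition included (A B : X -> Prop) : Prop := forall x, A x -> B x.

Definition in_ball (x : X) (r : R) (A : X -> Prop) : Prop :=
  forall y, A y -> d x y < r.

Definition closed_set (F : X -> Prop) : Prop :=
  forall x, mclosure d F x -> F x.

Lemma dist_self x : d x x = 0.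
Proof. destruct Hm as [_ [H _]]; apply H; reflexivity. Qed.

Lemma dist_sym x y : d x y = d y x.
Proof. destruct Hm as [_ [_ [H _]]]; apply H. Qed.

Lemma dist_triangle x y z : d x z <= d x y + d y z.
Proof. destruct Hm as [_ [_ [_ H]]]; apply H. Qed.

Lemma dist_pos x y : x <> y -> 0 < d x y.
Proof.
  destruct Hm as [Hnn [Hsep _]]; intro Hxy.
  destruct (Hnn x y) as [H|H]; [exact H|].
  exfalso; apply Hxy, Hsep; symmetry; exact H.
Qed.

Lemma closure_mono A B : included A B -> included (mclosure d A) (mclosure d B).
Proof.
  intros HAB x H eps He; destruct (H eps He) as [y [Hy Hxy]]; eauto.
Qed.

Lemma closure_closed A : closed_set (mclosure d A).
Proof.
  intros x H eps He.
  destruct (H (eps / 2)) as [y [Hy Hxy]]; [lra|].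
  destruct (Hy (eps / 2)) as [z [Hz Hyz]]; [lra|].
  exists z; split; [exact Hz|]; pose proof (dist_triangle x y z); lra.
Qed.

Lemma closure_of_approx A x :
  (forall n, exists y, A y /\ d x y < / INR (S n)) -> mclosure d A x.
Proof.
  intros H eps He; destruct (inv_succ_small eps He) as [n Hn].
  destruct (H n) as [y [Hy Hxy]]; exists y; split; [exact Hy | lra].
Qed.

(** Compact sets are closed: a point outside [K] gives the open cover of
    [K] by the complements of the closed balls of radius [1/(n+1)]. *)
Lemma compact_closed K : mcompact d K -> closed_set K.
Proof.
  intros HK x Hx; apply NNPP; intro Hnx.
  destruct (HK nat (fun n y => / INR (S n) < d x y)) as [l Hl].
  - intros n y Hy; exists (d x y - / INR (S n)); split; [lra|].
    intros z Hz; pose proof (dist_triangle x z y); rewrite (dist_sym z y) in *; lra.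
  - intros y Hy; apply inv_succ_small, dist_pos.
    intro; subst; contradiction.
  - destruct (list_nat_bound l) as [M HM].
    destruct (Hx (/ INR (S M)) (inv_succ_pos M)) as [y [Hy Hxy]].
    destruct (Hl y Hy) as [i [Hi Hcov]].
    pose proof (inv_succ_anti _ _ (HM i Hi)); lra.
Qed.

Lemma compact_ext A B : (forall x, A x <-> B x) -> mcompact d A -> mcompact d B.
Proof.
  intros HAB HA I U HU Hcov; destruct (HA I U HU) as [l Hl].
  - intros x Hx; apply Hcov, HAB, Hx.
  - exists l; intros x Hx; apply Hl, HAB, Hx.
Qed.

Lemma compact_singleton x : mcompact d (fun z => z = x).
Proof.
  intros I U _ Hcov; destruct (Hcov x eq_refl) as [i Hi].
  exists (i :: nil); intros z Hz; subst; exists i; split; [left|]; auto.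
Qed.

Lemma compact_union A B : mcompact d A -> mcompact d B ->
  mcompact d (fun z => A z \/ B z).
Proof.
  intros HA HB I U HU Hcov.
  destruct (HA I U HU) as [lA HlA]; [intros; apply Hcov; auto|].
  destruct (HB I U HU) as [lB HlB]; [intros; apply Hcov; auto|].
  exists (lA ++ lB); intros x [Hx|Hx].
  - destruct (HlA x Hx) as [i [Hi Hu]]; exists i; split; [apply in_or_app|]; auto.
  - destruct (HlB x Hx) as [i [Hi Hu]]; exists i; split; [apply in_or_app|]; auto.
Qed.

Lemma compact_finite_union (Kf : nat -> X -> Prop) :
  (forall n, mcompact d (Kf n)) ->
  forall M, mcompact d (fun z => exists n, (n < M)%nat /\ Kf n z).
Proof.
  intros HK M; induction M as [|M IH].
  - intros I U _ _; exists nil; intros z [n [Hn _]]; lia.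
  - apply compact_ext with (fun z => (exists n, (n < M)%nat /\ Kf n z) \/ Kf M z).
    + intro z; split.
      * intros [[n [Hn Hz]]|Hz]; [exists n | exists M]; split; [lia | assumption | lia | assumption].
      * intros [n [Hn Hz]]; destruct (Nat.eq_dec n M) as [->|Hne]; [right|left]; auto.
        exists n; split; [lia | exact Hz].
    + apply compact_union; auto.
Qed.

Definition comet (x : X) (Kf : nat -> X -> Prop) : X -> Prop :=
  fun z => z = x \/ exists n, Kf n z.

Lemma comet_piece x Kf n : included (Kf n) (comet x Kf).
Proof. intros z Hz; right; exists n; exact Hz. Qed.

(** A comet of compact pieces shrinking to its head is compact: an open set
    around [x] swallows all but finitely many pieces. *)
Lemma comet_compact x Kf :
  (forall n, mcompact d (Kf n)) -> (forall n, in_ball x (/ INR (S n)) (Kf n)) ->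
  mcompact d (comet x Kf).
Proof.
  intros HK Hball I U HU Hcov.
  destruct (Hcov x (or_introl eq_refl)) as [i0 Hi0].
  destruct (HU i0 x Hi0) as [e [He Hnear]].
  destruct (inv_succ_small e He) as [N HN].
  destruct (compact_finite_union Kf HK N I U HU) as [l Hl].
  { intros z [n [_ Hz]]; apply Hcov, (comet_piece x Kf n), Hz. }
  exists (i0 :: l); intros z [->|[n Hz]].
  - exists i0; split; [left|]; auto.
  - destruct (Compare_dec.lt_dec n N) as [Hlt|Hge].
    + destruct (Hl z) as [i [Hi Hu]]; [exists n; auto|].
      exists i; split; [right|]; auto.
    + exists i0; split; [left; reflexivity|]; apply Hnear.
      pose proof (Hball n z Hz); pose proof (inv_succ_anti N n ltac:(lia)); lra.
Qed.

Definition local_compact (F : X -> Prop) (x : X) (r : R) (K : X -> Prop) : Prop :=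
  mcompact d K /\ included K F /\ in_ball x r K.

Lemma local_compact_union F x r A B :
  local_compact F x r A -> local_compact F x r B ->
  local_compact F x r (fun z => A z \/ B z).
Proof.
  intros [HA [HAF HAb]] [HB [HBF HBb]]; split; [|split].
  - apply compact_union; assumption.
  - intros z [Hz|Hz]; auto.
  - intros z [Hz|Hz]; auto.
Qed.

Lemma local_compact_recenter F x y r K :
  d x y < r / 2 -> local_compact F y (r / 2) K -> local_compact F x r K.
Proof.
  intros Hxy [HK [HKF Hb]]; split; [|split]; try assumption.
  intros z Hz; pose proof (Hb z Hz); pose proof (dist_triangle x y z); lra.
Qed.

Lemma local_compact_comet F x eps Kf : 0 < eps -> F x ->
  (forall n, local_compact F x (shrink eps n) (Kf n)) ->
  local_compact F x eps (comet x Kf).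
Proof.
  intros He Hx HK; split; [|split].
  - apply comet_compact; intros n; [apply HK|].
    intros z Hz; destruct (HK n) as [_ [_ Hb]].
    pose proof (Hb z Hz); pose proof (shrink_le_inv eps n); lra.
  - intros z [->|[n Hz]]; [exact Hx | apply (HK n), Hz].
  - intros z [->|[n Hz]]; [rewrite dist_self; exact He|].
    destruct (HK n) as [_ [_ Hb]].
    pose proof (Hb z Hz); pose proof (shrink_le_eps eps n); lra.
Qed.

Section Derivatives.

Variables (f : X -> R) (a b : R).

Lemma sderiv_mono F G : included F G -> included (sderiv d f a b F) (sderiv d f a b G).
Proof.
  intros HFG x [Hlow Hhigh]; split.
  - revert Hlow; apply closure_mono; intros y [Hy Hfy]; auto.
  - revert Hhigh; apply closure_mono; intros y [Hy Hfy]; auto.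
Qed.

Lemma sderiv_closed F : closed_set (sderiv d f a b F).
Proof.
  intros x Hx; split; apply closure_closed; revert Hx; apply closure_mono.
  - intros y [H _]; exact H.
  - intros y [_ H]; exact H.
Qed.

Lemma sderiv_sub F : closed_set F -> included (sderiv d f a b F) F.
Proof.
  intros HF x [Hlow _]; apply HF; revert Hlow; apply closure_mono.
  intros y [Hy _]; exact Hy.
Qed.

Lemma iter_mono F G : included F G ->
  forall eta, included (iter_deriv d f a b F eta) (iter_deriv d f a b G eta).
Proof.
  intros HFG eta; induction eta as [|e IH|g IH]; simpl.
  - exact HFG.
  - apply sderiv_mono, IH.
  - intros x Hx n; apply IH, Hx.
Qed.

Lemma iter_closed F : closed_set F -> forall eta, closed_set (iter_deriv d f a b F eta).
Proof.
  intros HF eta; induction eta as [|e IH|g IH]; simpl.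
  - exact HF.
  - apply sderiv_closed.
  - intros x Hx n; apply IH; revert Hx; apply closure_mono; intros y Hy; apply Hy.
Qed.

Lemma iter_sub F : closed_set F -> forall eta, included (iter_deriv d f a b F eta) F.
Proof.
  intros HF eta; induction eta as [|e IH|g IH]; simpl; intros x Hx.
  - exact Hx.
  - apply IH, (sderiv_sub _ (iter_closed F HF e)), Hx.
  - apply (IH 0%nat), Hx.
Qed.

Lemma iter_anti F : closed_set F -> forall u v, ole u v ->
  included (iter_deriv d f a b F v) (iter_deriv d f a b F u).
Proof.
  intros HF u v Huv.
  induction Huv as [u|u|u v _ IH|u g n _ IH|g u _ IH|u v w _ IH1 _ IH2];
    intros z Hz.
  - apply (iter_sub F HF _ _ Hz).
  - apply (sderiv_sub _ (iter_closed F HF u)), Hz.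
  - revert Hz; apply sderiv_mono, IH.
  - apply IH, Hz.
  - intro n; apply IH, Hz.
  - apply IH1, IH2, Hz.
Qed.

Definition localizable (F : X -> Prop) (eta : Ord) (x : X) : Prop :=
  forall eps, 0 < eps ->
    exists K, local_compact F x eps K /\ iter_deriv d f a b K eta x.

Lemma localize_zero F x : F x -> localizable F OZ x.
Proof.
  intros Hx eps He; exists (fun z => z = x); split; [split; [|split]|]; simpl.
  - apply compact_singleton.
  - intros z ->; exact Hx.
  - intros z ->; rewrite dist_self; exact He.
  - reflexivity.
Qed.

(** Successor step: the [n]-th piece of the comet localizes, at scale
    [shrink eps n], one point of [F^(e)] below [a] and one above [b]. *)
Lemma localize_succ F e x : closed_set F ->
  (forall y, iter_deriv d f a b F e y -> localizable F e y) ->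
  iter_deriv d f a b F (OS e) x -> localizable F (OS e) x.
Proof.
  intros HF IH Hx eps He; pose proof Hx as [Hlow Hhigh].
  assert (Hpiece : forall n, exists K, local_compact F x (shrink eps n) K /\
      (exists y, iter_deriv d f a b K e y /\ f y < a /\ d x y < shrink eps n) /\
      (exists y, iter_deriv d f a b K e y /\ f y > b /\ d x y < shrink eps n)).
  { intro n; pose proof (shrink_pos eps n He) as Hr; set (r := shrink eps n) in *.
    destruct (Hlow (r / 2)) as [y [[Hy Hfy] Hxy]]; [lra|].
    destruct (Hhigh (r / 2)) as [y' [[Hy' Hfy'] Hxy']]; [lra|].
    destruct (IH y Hy (r / 2)) as [K [HK HKy]]; [lra|].
    destruct (IH y' Hy' (r / 2)) as [K' [HK' HKy']]; [lra|].
    exists (fun z => K z \/ K' z); split; [|split].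
    - apply local_compact_union.
      + exact (local_compact_recenter F x y r K Hxy HK).
      + exact (local_compact_recenter F x y' r K' Hxy' HK').
    - exists y; split; [|split; [exact Hfy | lra]].
      revert HKy; apply iter_mono; intros z Hz; left; exact Hz.
    - exists y'; split; [|split; [exact Hfy' | lra]].
      revert HKy'; apply iter_mono; intros z Hz; right; exact Hz. }
  destruct (choice _ Hpiece) as [Kf HKf].
  exists (comet x Kf); split.
  - apply local_compact_comet; [exact He | | intro n; apply HKf].
    exact (iter_sub F HF (OS e) x Hx).
  - split; apply closure_of_approx; intro n.
    + destruct (HKf n) as [_ [[y [Hy [Hfy Hxy]]] _]].
      exists y; split; [split; [|exact Hfy]|].
      * revert Hy; apply iter_mono, comet_piece.
      * pose proof (shrink_le_inv eps n); lra.
    + destruct (HKf n) as [_ [_ [y [Hy [Hfy Hxy]]]]].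
      exists y; split; [split; [|exact Hfy]|].
      * revert Hy; apply iter_mono, comet_piece.
      * pose proof (shrink_le_inv eps n); lra.
Qed.

(** Limit step: the [n]-th piece localizes [x] in the [n]-th earlier stage. *)
Lemma localize_limit F g x : closed_set F ->
  (forall n y, iter_deriv d f a b F (g n) y -> localizable F (g n) y) ->
  iter_deriv d f a b F (OL g) x -> localizable F (OL g) x.
Proof.
  intros HF IH Hx eps He.
  destruct (choice (fun n K => local_compact F x (shrink eps n) K /\
                                    iter_deriv d f a b K (g n) x)) as [Kf HKf].
  { intro n; apply (IH n x (Hx n)), shrink_pos, He. }
  exists (comet x Kf); split.
  - apply local_compact_comet; [exact He | | intro n; apply HKf].
    exact (iter_sub F HF (OL g) x Hx).
  - intro n; apply (iter_mono (Kf n) _ (comet_piece x Kf n)), HKf.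
Qed.

Lemma iter_deriv_localize F : closed_set F ->
  forall eta x, iter_deriv d f a b F eta x -> localizable F eta x.
Proof.
  intros HF eta; induction eta as [|e IH|g IH]; intros x Hx.
  - apply localize_zero, Hx.
  - apply localize_succ; assumption.
  - apply localize_limit; assumption.
Qed.

Lemma alpha_exists F : exists o, is_alpha d f F a b o.
Proof.
  destruct (classic (exists eta, mempty (iter_deriv d f a b F eta))) as [H|H].
  - destruct (ord_least _ H) as [m [Hm1 Hm2]]; exists (Some m); split; assumption.
  - exists None; intros eta He; apply H; exists eta; exact He.
Qed.

Lemma alpha_mono F G oF oG : included F G ->
  is_alpha d f F a b oF -> is_alpha d f G a b oG -> ord1_le oF oG.
Proof.
  intros HFG HoF HoG; destruct oG as [xi|]; [|destruct oF; exact I].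
  destruct HoG as [Hempty _].
  assert (HF : mempty (iter_deriv d f a b F xi)).
  { intros z Hz; apply (Hempty z), (iter_mono F G HFG xi z Hz). }
  destruct oF as [w|]; simpl in *; [apply HoF, HF | exact (HoF xi HF)].
Qed.

Lemma alpha_le_of_empty F o v : is_alpha d f F a b o ->
  mempty (iter_deriv d f a b F v) -> ord1_le o (Some v).
Proof.
  intros Ho Hv; destruct o as [xi|]; simpl in *; [apply Ho, Hv | exact (Ho v Hv)].
Qed.

(** If every compact subset of a closed [F] has rank at most [v], then
    [F^(v)] is empty: a point of [F^(v)] would lie in [K^(v)] for some
    compact [K ⊆ F], whereas [K^(v)] is empty. *)
Lemma compact_bound_empty F v : closed_set F ->
  (forall K oK, mcompact d K -> included K F -> is_alpha d f K a b oK ->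
     ord1_le oK (Some v)) ->
  mempty (iter_deriv d f a b F v).
Proof.
  intros HF Hbound x Hx.
  destruct (iter_deriv_localize F HF v x Hx 1 Rlt_0_1) as [K [[HK [HKF _]] HxK]].
  destruct (alpha_exists K) as [oK HoK].
  specialize (Hbound K oK HK HKF HoK).
  destruct oK as [w|]; simpl in Hbound; [|contradiction].
  destruct HoK as [Hw _]; apply (Hw x).
  exact (iter_anti K (compact_closed K HK) w v Hbound x HxK).
Qed.

Theorem alpha_sup_compact F o : closed_set F -> is_alpha d f F a b o ->
  (forall K oK, mcompact d K -> included K F -> is_alpha d f K a b oK ->
     ord1_le oK o) /\
  (forall u, (forall K oK, mcompact d K -> included K F -> is_alpha d f K a b oK ->
     ord1_le oK u) -> ord1_le o u).
Proof.
  intros HF Ho; split.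
  - intros K oK _ HKF HoK; exact (alpha_mono K F oK o HKF HoK Ho).
  - intros [v|] Hu; [|destruct o; exact I].
    exact (alpha_le_of_empty F o v Ho (compact_bound_empty F v HF Hu)).
Qed.

End Derivatives.

End Metric.

Theorem proposition4p1 (X : Type) (d : X -> X -> R) (HX : polish d)
  (f : X -> R) (Hf : baire1 d f) (a b : R) (Hab : a < b) :
  exists o : ord1,
    is_alpha d f (fun _ => True) a b o /\
    (* o is an upper bound of { alpha(f,K,a,b) : K mcompact } *)
    (forall (K : X -> Prop) (oK : ord1),
        mcompact d K -> is_alpha d f K a b oK -> ord1_le oK o) /\
    (* and the least one *)
    (forall u : ord1,
        (forall (K : X -> Prop) (oK : ord1),
            mcompact d K -> is_alpha d f K a b oK -> ord1_le oK u) ->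
        ord1_le o u).
Proof.
  destruct HX as [Hm _].
  destruct (alpha_exists d f a b (fun _ => True)) as [o Ho].
  assert (Hclosed : closed_set d (fun _ => True)) by (intros x _; exact I).
  destruct (alpha_sup_compact d Hm f a b _ o Hclosed Ho) as [Hupper Hleast].
  exists o; split; [exact Ho | split].
  - intros K oK HK HoK; exact (Hupper K oK HK (fun _ _ => I) HoK).
  - intros u Hu; apply Hleast; intros K oK HK _ HoK; exact (Hu K oK HK HoK).
Qed.
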